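(* For every $\theta^{\max}\in(0,\pi]$ and every real $\theta<\theta^{\max}$, $$\sin\theta\ge \theta+\left(\frac{\sin\theta^{\max}-\theta^{\max}}{(\theta^{\max})^2}\right)\theta^2,$$ and for every $\theta^{\min}\in[-\pi,0)$ and every real $\theta>\theta^{\min}$, $$\sin\theta\le \theta+\left(\frac{\sin\theta^{\min}-\theta^{\min}}{(\theta^{\min})^2}\right)\theta^2.$$ Moreover, for all real $\theta$, $1-\tfrac12\theta^2\le\cos\theta\le 1$. *)

From Stdlib Require Export Reals.

(* The function [t |-> (t - sin t) / t^2] is nondecreasing on (0, PI]: writing
   t = 2u, the numerator of its derivative is 4 cos u (sin u - u cos u) >= 0.
   For 0 < th < thmax this gives th - sin th <= ((thmax - sin thmax)/thmax^2) th^2,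
   while for th <= 0 the bound follows from th <= sin th and the sign of the
   coefficient.  The bound for th > thmin follows by oddness of sin, and the
   cosine bound from cos th = 1 - 2 sin^2 (th/2) together with |sin x| <= |x|. *)
From Stdlib Require Import Reals Lra Psatz.
From Coquelicot Require Import Coquelicot.
Open Scope R_scope.

Lemma nonneg_derive_le (f df : R -> R) (a b : R) :
  a <= b ->
  (forall x, a <= x <= b -> is_derive f x (df x)) ->
  (forall x, a <= x <= b -> 0 <= df x) ->
  f a <= f b.
Proof.
  intros Hab Hder Hpos.
  destruct (MVT_gen f a b df) as [c [Hc Heq]];
    rewrite ?Rmin_left, ?Rmax_right in * by lra.
  - intros x Hx. apply Hder. lra.
  - intros x Hx. apply continuity_pt_filterlim.
    apply (ex_derive_continuous (V := R_NormedModule)).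
    exists (df x). now apply Hder.
  - assert (Hdf : 0 <= df c) by (apply Hpos; lra).
    nra.
Qed.

Lemma mul_cos_le_sin u : 0 <= u <= PI / 2 -> u * cos u <= sin u.
Proof.
  intros Hu.
  assert (H := nonneg_derive_le (fun t => sin t - t * cos t) (fun t => t * sin t) 0 u).
  simpl in H. rewrite sin_0, Rmult_0_l in H.
  enough (0 - 0 <= sin u - u * cos u) by lra.
  apply H; [lra | |].
  - intros x _. auto_derive; [easy | ring].
  - intros x Hx. apply Rmult_le_pos; [lra |].
    apply sin_ge_0; pose proof PI_RGT_0; lra.
Qed.

Definition sin_defect (t : R) : R := (t - sin t) / t ^ 2.

Lemma is_derive_sin_defect t :
  t <> 0 -> is_derive sin_defect t ((2 * sin t - t - t * cos t) / t ^ 3).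
Proof.
  intros Ht. unfold sin_defect. auto_derive.
  - intros H. apply Ht. nra.
  - field. exact Ht.
Qed.

Lemma sin_defect_derive_num_ge0 t : 0 <= t <= PI -> 0 <= 2 * sin t - t - t * cos t.
Proof.
  intros Ht.
  replace t with (2 * (t / 2)) by field.
  set (u := t / 2).
  assert (Hsin := mul_cos_le_sin u ltac:(unfold u; lra)).
  assert (Hcos : 0 <= cos u) by (apply cos_ge_0; unfold u; pose proof PI_RGT_0; lra).
  rewrite sin_2a, cos_2a_cos.
  nra.
Qed.

Lemma sin_defect_le s t : 0 < s -> s <= t -> t <= PI -> sin_defect s <= sin_defect t.
Proof.
  intros Hs Hst Ht.
  apply (nonneg_derive_le _ (fun x => (2 * sin x - x - x * cos x) / x ^ 3)); [lra | |].
  - intros x Hx. apply is_derive_sin_defect. lra.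
  - intros x Hx. apply Rdiv_le_0_compat.
    + apply sin_defect_derive_num_ge0. lra.
    + apply pow_lt. lra.
Qed.

Lemma sin_quadratic_lower_bound a :
  0 < a <= PI -> forall th, th < a -> th + ((sin a - a) / a ^ 2) * th ^ 2 <= sin th.
Proof.
  intros Ha th Hth.
  replace ((sin a - a) / a ^ 2) with (- sin_defect a) by (unfold sin_defect; field; lra).
  assert (Hdefect_a : 0 <= sin_defect a).
  { apply Rdiv_le_0_compat; [pose proof (sin_lt_x a ltac:(lra)); lra | apply pow_lt; lra]. }
  destruct (Rlt_or_le 0 th) as [Hpos | Hnonpos].
  - assert (Hmono := sin_defect_le th a Hpos (Rlt_le _ _ Hth) (proj2 Ha)).
    assert (Hsq : 0 < th ^ 2) by (apply pow_lt; lra).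
    assert (Hsin : sin th = th - sin_defect th * th ^ 2) by (unfold sin_defect; field; lra).
    nra.
  - assert (Hsin : th <= sin th).
    { destruct (Rle_lt_or_eq_dec _ _ Hnonpos) as [Hneg | ->].
      - pose proof (sin_gt_x th Hneg). lra.
      - rewrite sin_0. lra. }
    nra.
Qed.

Lemma sin_quadratic_upper_bound b :
  - PI <= b < 0 -> forall th, b < th -> sin th <= th + ((sin b - b) / b ^ 2) * th ^ 2.
Proof.
  intros Hb th Hth.
  assert (H := sin_quadratic_lower_bound (- b) ltac:(lra) (- th) ltac:(lra)).
  rewrite !sin_neg in H.
  replace ((- sin b - - b) / (- b) ^ 2 * (- th) ^ 2) with
    (- ((sin b - b) / b ^ 2 * th ^ 2)) in H by (field; lra).
  lra.
Qed.

Lemma sin_sqr_le x : sin x ^ 2 <= x ^ 2.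
Proof.
  assert (Habs : Rabs (sin x - sin 0) <= 1 * Rabs (x - 0)).
  { apply (bounded_variation sin cos). intros t _. split.
    - auto_derive; [easy | ring].
    - apply Rabs_le, COS_bound. }
  rewrite sin_0, !Rminus_0_r, Rmult_1_l in Habs.
  rewrite <- !Rsqr_pow2. now apply Rsqr_le_abs_1.
Qed.

Lemma cos_quadratic_lower_bound th : 1 - / 2 * th ^ 2 <= cos th.
Proof.
  replace th with (2 * (th / 2)) at 2 by field.
  rewrite cos_2a_sin.
  pose proof (sin_sqr_le (th / 2)).
  nra.
Qed.

Theorem corollary3 :
  (forall thmax : R, 0 < thmax <= PI ->
     forall th : R, th < thmax ->
       th + ((sin thmax - thmax) / (thmax ^ 2)) * th ^ 2 <= sin th) /\
  (forall thmin : R, - PI <= thmin < 0 ->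
     forall th : R, thmin < th ->
       sin th <= th + ((sin thmin - thmin) / (thmin ^ 2)) * th ^ 2) /\
  (forall th : R, 1 - / 2 * th ^ 2 <= cos th <= 1).
Proof.
  split; [exact sin_quadratic_lower_bound |].
  split; [exact sin_quadratic_upper_bound |].
  intros th. split; [apply cos_quadratic_lower_bound | apply COS_bound].
Qed.
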